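(* Assume $\mu\le0$. Then the function $$v(y)=\int_0^y\Big\{\frac{\kappa_A(u)}{G\big(\kappa_A(u)/A\big)}+AF\Big(G\Big(\frac{\kappa_A(u)}{A}\Big)\Big)\Big\}\,du,\qquad 0\le y<\bar\delta_A,$$ (where the integrand at $u=0$ is defined by continuity, equal to $0$) is continuously differentiable on $[0,\bar\delta_A)$ and is a classical solution of the Hamilton–Jacobi–Bellman equation $$\kappa_A(y)+\inf_{x\ge0}\{AxF(x)-xv'(y)\}=0,\qquad y\in[0,\bar\delta_A),$$ with boundary condition $v(0)=0$; moreover the infimum is attained at $x^*=G(\kappa_A(y)/A)$.
   Context: $L$ is a one-dimensional, non-trivial Lévy process such that $L_1$ has finite second moment and the set $\{\delta<0:\mathbb E[e^{\delta L_1}]<\infty\}$ is non-empty; it has the decomposition $L_t=\mu t+\sigma W_t+\int_{\mathbb R}x\,(N(t,dx)-t\nu(dx))$ with $\mu\in\mathbb R$ the drift. Let $\bar\delta=\inf\{\delta<0:\mathbb E[e^{\delta L_1}]<\infty\}$, $A>0$, $\bar\delta_A=-\bar\delta/A$, $\kappa(x)=\ln\mathbb E[e^{xL_1}]$ and $\kappa_A(x)=\kappa(-Ax)$ for $x\in[0,\bar\delta_A)$ (when $\mu\le 0$, $\kappa_A\ge0$). $F:[0,\infty)\to[0,\infty)$ satisfies (i) $F\in C([0,\infty))\cap C^1((0,\infty))$; (ii) $F(0)=0$; (iii) $x\mapsto xF(x)$ is strictly convex on $[0,\infty)$; (iv) $x\mapsto x^2F'(x)$ is strictly increasing on $(0,\infty)$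 and tends to $\infty$ as $x\to\infty$. $G:[0,\infty)\to[0,\infty)$ is the inverse of $x\mapsto x^2F'(x)$, with $G(0)=0$. *)

From Stdlib Require Import Reals Lra.
Open Scope R_scope.

(* Upper end of the domain [0, dA): None encodes +infinity
   (the case bar_delta = -infinity), Some b a finite bound b. *)
Definition below (y : R) (dA : option R) : Prop :=
  match dA with None => True | Some b => y < b end.

Definition in_dom (y : R) (dA : option R) : Prop := 0 <= y /\ below y dA.

Definition strictly_convex_nonneg (h : R -> R) : Prop :=
  forall x y t, 0 <= x -> 0 <= y -> x <> y -> 0 < t < 1 ->
    h (t * x + (1 - t) * y) < t * h x + (1 - t) * h y.

Definition integrand (kA F G : R -> R) (A u : R) : R :=
  if Req_EM_T u 0 then 0
  else kA u / G (kA u / A) + A * F (G (kA u / A)).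

From Stdlib Require Import Reals Lra Psatz.
From Coquelicot Require Import Coquelicot.
Open Scope R_scope.

(* With xs = G (kA y / A) we have kA y = A xs^2 F'(xs), which turns the integrand into
   A (x F(x))' at x = xs.  The tangent line of the convex cost x F(x) at xs then gives
   kA y + A x F(x) - x v'(y) >= 0 for every x >= 0, with equality at x = xs.
   v' is continuous because G is (it inverts the increasing map x^2 F'(x)) and because the
   marginal cost F(x) + x F'(x) tends to 0 at 0, as 0 <= x F'(x) <= 2 F(2x) by convexity;
   the fundamental theorem of calculus then makes v a C^1 solution. *)

Definition continuous_within (D : R -> Prop) (f : R -> R) (y : R) : Prop :=
  forall eps, 0 < eps -> exists delta, 0 < delta /\
    forall z, D z -> Rabs (z - y) < delta -> Rabs (f z - f y) < eps.

Lemma continuous_within_subset (D E : R -> Prop) f y :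
  (forall z, D z -> E z) -> continuous_within E f y -> continuous_within D f y.
Proof.
  intros DE Hf eps Heps. destruct (Hf eps Heps) as [delta [Hdelta Hz]].
  exists delta; split; auto.
Qed.

Lemma continuous_within_local (D P : R -> Prop) f y r : 0 < r ->
  (forall z, Rabs (z - y) < r -> P z) ->
  continuous_within (fun z => D z /\ P z) f y -> continuous_within D f y.
Proof.
  intros Hr HP Hf eps Heps. destruct (Hf eps Heps) as [delta [Hdelta Hz]].
  exists (Rmin delta r); split; [now apply Rmin_glb_lt|].
  intros z Dz Hzy. pose proof (Rmin_l delta r). pose proof (Rmin_r delta r).
  apply Hz; [split; [|apply HP]|]; auto; lra.
Qed.

Lemma continuity_pt_continuous_within D f y :
  continuity_pt f y -> continuous_within D f y.
Proof.
  intros Hf eps Heps. destruct (Hf eps Heps) as [delta [Hdelta Hz]].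
  exists delta; split; auto.
  intros z _ Hzy. destruct (Req_dec z y) as [->|Hne].
  - rewrite Rminus_diag, Rabs_R0; auto.
  - apply Hz. repeat split; auto.
Qed.

Lemma continuous_within_continuity_pt D f y r : 0 < r ->
  (forall z, Rabs (z - y) < r -> D z) ->
  continuous_within D f y -> continuity_pt f y.
Proof.
  intros Hr HD Hf eps Heps. destruct (Hf eps Heps) as [delta [Hdelta Hz]].
  exists (Rmin delta r); split; [now apply Rmin_glb_lt|].
  intros z [_ Hzy]. simpl in Hzy |- *. unfold R_dist in *.
  pose proof (Rmin_l delta r). pose proof (Rmin_r delta r).
  apply Hz; [apply HD|]; lra.
Qed.

Lemma continuous_within_comp (D E : R -> Prop) f h y :
  (forall z, D z -> E (f z)) -> continuous_within D f y ->
  continuous_within E h (f y) -> continuous_within D (fun z => h (f z)) y.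
Proof.
  intros DE Hf Hh eps Heps.
  destruct (Hh eps Heps) as [eta [Heta Hz]].
  destruct (Hf eta Heta) as [delta [Hdelta Hw]].
  exists delta; split; auto.
Qed.

Lemma continuous_within_scal D f c y :
  continuous_within D f y -> continuous_within D (fun z => c * f z) y.
Proof.
  intros Hf eps Heps.
  assert (Hc : 0 < Rabs c + 1) by (pose proof (Rabs_pos c); lra).
  destruct (Hf (eps / (Rabs c + 1))) as [delta [Hdelta Hz]].
  { now apply Rdiv_lt_0_compat. }
  exists delta; split; auto. intros z Dz Hzy.
  rewrite <- Rmult_minus_distr_l, Rabs_mult.
  specialize (Hz z Dz Hzy).
  apply Rle_lt_trans with (Rabs c * (eps / (Rabs c + 1))).
  - apply Rmult_le_compat_l; [apply Rabs_pos | lra].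
  - apply (Rmult_lt_reg_r (Rabs c + 1)); [lra|].
    replace (Rabs c * (eps / (Rabs c + 1)) * (Rabs c + 1)) with (Rabs c * eps) by (field; lra).
    nra.
Qed.

Lemma continuous_within_ext (D : R -> Prop) f h y : D y ->
  (forall z, D z -> f z = h z) ->
  continuous_within D h y -> continuous_within D f y.
Proof.
  intros Dy Hfh Hh eps Heps. destruct (Hh eps Heps) as [delta [Hdelta Hz]].
  exists delta; split; auto. intros z Dz Hzy. rewrite !Hfh; auto.
Qed.

Lemma Rabs_clamp_le a b w z :
  Rabs (Rmax a (Rmin b w) - Rmax a (Rmin b z)) <= Rabs (w - z).
Proof.
  unfold Rmax, Rmin; repeat destruct Rle_dec;
    unfold Rabs; repeat destruct Rcase_abs; lra.
Qed.

Lemma ex_RInt_continuous_within g a b : a <= b ->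
  (forall z, a <= z <= b -> continuous_within (fun w => a <= w <= b) g z) ->
  ex_RInt g a b.
Proof.
  intros Hab Hg.
  set (clamp := fun w => Rmax a (Rmin b w)).
  assert (clamp_in : forall w, a <= clamp w <= b).
  { intros w. unfold clamp. split; [apply Rmax_l|].
    apply Rmax_lub; [lra | apply Rmin_l]. }
  apply (ex_RInt_ext (fun w => g (clamp w))).
  { intros x Hx. rewrite Rmin_left, Rmax_right in Hx by lra.
    unfold clamp. rewrite Rmin_right, Rmax_right by lra. reflexivity. }
  apply (ex_RInt_continuous (V := R_CompleteNormedModule)). intros z _.
  apply continuity_pt_filterlim.
  apply (continuous_within_continuity_pt (fun _ => True) _ z 1); [lra | auto |].
  apply (continuous_within_comp _ (fun w => a <= w <= b));
    [intros w _; apply clamp_in | | apply Hg, clamp_in].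
  intros eps Heps. exists eps; split; auto. intros w _ Hwz.
  eapply Rle_lt_trans; [apply Rabs_clamp_le | exact Hwz].
Qed.

Lemma RInt_right_derivative g a r : 0 < r ->
  (forall x, a <= x < a + r -> ex_RInt g a x) ->
  continuous_within (fun z => a <= z < a + r) g a ->
  forall eps, 0 < eps -> exists delta, 0 < delta /\
    forall x, a < x < a + delta -> Rabs (RInt g a x / (x - a) - g a) < eps.
Proof.
  intros Hr Hint Hg eps Heps.
  destruct (Hg (eps / 2)) as [delta [Hdelta Hnear]]; [lra|].
  exists (Rmin delta r); split; [now apply Rmin_glb_lt|].
  intros x Hx. pose proof (Rmin_l delta r). pose proof (Rmin_r delta r).
  assert (Hbound : forall t, a < t < x -> g a - eps / 2 <= g t <= g a + eps / 2).
  { intros t Ht. assert (Hgt : Rabs (g t - g a) < eps / 2).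
    { apply Hnear; [lra|]. rewrite Rabs_pos_eq; lra. }
    apply Rabs_def2 in Hgt. lra. }
  assert (Hgx : ex_RInt g a x) by (apply Hint; lra).
  assert (Hlow : RInt (fun _ => g a - eps / 2) a x <= RInt g a x).
  { apply RInt_le; [lra | apply ex_RInt_const | exact Hgx |].
    intros t Ht. apply Hbound; auto. }
  assert (Hup : RInt g a x <= RInt (fun _ => g a + eps / 2) a x).
  { apply RInt_le; [lra | exact Hgx | apply ex_RInt_const |].
    intros t Ht. apply Hbound; auto. }
  rewrite !RInt_const in Hlow, Hup. unfold scal in Hlow, Hup; simpl in Hlow, Hup.
  unfold mult in Hlow, Hup; simpl in Hlow, Hup.
  replace (RInt g a x / (x - a) - g a) with ((RInt g a x - (x - a) * g a) / (x - a))
    by (field; lra).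
  unfold Rdiv. rewrite Rabs_mult, Rabs_inv, (Rabs_pos_eq (x - a)) by lra.
  apply (Rmult_lt_reg_r (x - a)); [lra|].
  rewrite Rmult_assoc, Rinv_l, Rmult_1_r by lra.
  apply Rabs_def1; nra.
Qed.

Lemma strictly_convex_tangent_le (h : R -> R) d x0 x :
  strictly_convex_nonneg h -> 0 <= x0 -> 0 <= x ->
  derivable_pt_lim h x0 d -> h x0 + d * (x - x0) <= h x.
Proof.
  intros Hconv Hx0 Hx Hd.
  destruct (Req_dec x x0) as [->|Hne]; [lra|].
  assert (Hdist : 0 < Rabs (x - x0)) by (apply Rabs_pos_lt; lra).
  apply Rle_plus_epsilon. intros eps Heps.
  destruct (Hd (eps / Rabs (x - x0))) as [delta Hdelta].
  { now apply Rdiv_lt_0_compat. }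
  (* At x0 + t (x - x0), t small, the chord lies above h and h is within t eps of its tangent. *)
  set (t := Rmin (1 / 2) (delta / (2 * Rabs (x - x0)))).
  assert (Ht : 0 < t < 1).
  { pose proof (Rmin_l (1 / 2) (delta / (2 * Rabs (x - x0)))).
    unfold t; split; [apply Rmin_glb_lt; [lra|] | lra].
    apply Rdiv_lt_0_compat; [apply cond_pos | lra]. }
  set (s := t * (x - x0)).
  assert (Hs0 : s <> 0) by (apply Rmult_integral_contrapositive; split; lra).
  assert (Hs : Rabs s = t * Rabs (x - x0)) by (unfold s; rewrite Rabs_mult, Rabs_pos_eq; lra).
  assert (Hsdelta : Rabs s < delta).
  { rewrite Hs. pose proof (Rmin_r (1 / 2) (delta / (2 * Rabs (x - x0)))) as Htle.
    apply Rle_lt_trans with (delta / (2 * Rabs (x - x0)) * Rabs (x - x0)).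
    - apply Rmult_le_compat_r; [apply Rabs_pos | exact Htle].
    - replace (delta / (2 * Rabs (x - x0)) * Rabs (x - x0)) with (delta / 2) by (field; lra).
      pose proof (cond_pos delta); lra. }
  assert (Hchord : h (x0 + s) < t * h x + (1 - t) * h x0).
  { replace (x0 + s) with (t * x + (1 - t) * x0) by (unfold s; ring). now apply Hconv. }
  assert (Htangent : Rabs (h (x0 + s) - h x0 - d * s) < t * eps).
  { replace (h (x0 + s) - h x0 - d * s) with (s * ((h (x0 + s) - h x0) / s - d))
      by (field; auto).
    rewrite Rabs_mult, Hs.
    replace (t * eps) with (t * Rabs (x - x0) * (eps / Rabs (x - x0))) by (field; lra).
    apply Rmult_lt_compat_l; [nra | now apply Hdelta]. }
  apply Rabs_def2 in Htangent. unfold s in *.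
  apply (Rmult_le_reg_l t); [lra|]. nra.
Qed.

Definition marginal_cost (F F' : R -> R) (x : R) : R := F x + x * F' x.

Section Cost.

Variables F F' : R -> R.
Hypothesis hFnn : forall x, 0 <= x -> 0 <= F x.
Hypothesis hFder : forall x, 0 < x -> derivable_pt_lim F x (F' x).
Hypothesis hF0 : F 0 = 0.
Hypothesis hFconv : strictly_convex_nonneg (fun x => x * F x).

Lemma cost_tangent_le x0 x : 0 < x0 -> 0 <= x ->
  x0 * F x0 + marginal_cost F F' x0 * (x - x0) <= x * F x.
Proof.
  intros Hx0 Hx.
  apply (strictly_convex_tangent_le (fun u => u * F u)); auto; [lra|].
  unfold marginal_cost. replace (F x0 + x0 * F' x0) with (1 * F x0 + x0 * F' x0) by ring.
  apply (derivable_pt_lim_mult id F); [apply derivable_pt_lim_id | auto].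
Qed.

Lemma sqr_mul_F'_gt0 x : 0 < x -> 0 < x ^ 2 * F' x.
Proof.
  intros Hx. pose proof (cost_tangent_le x (x / 2) Hx ltac:(lra)) as Htangent.
  pose proof (hFconv 0 x (1 / 2) (Rle_refl 0) ltac:(lra) ltac:(lra) ltac:(lra)) as Hmid.
  cbv beta in Hmid. rewrite hF0 in Hmid.
  replace (1 / 2 * 0 + (1 - 1 / 2) * x) with (x / 2) in Hmid by field.
  unfold marginal_cost in Htangent. nra.
Qed.

Lemma mul_F'_le_F_double x : 0 < x -> x * F' x <= 2 * F (2 * x).
Proof.
  intros Hx. pose proof (cost_tangent_le x (2 * x) Hx ltac:(lra)) as Htangent.
  pose proof (hFnn x ltac:(lra)). unfold marginal_cost in Htangent. nra.
Qed.

Lemma hamiltonian_gap_ge0 xs x : 0 <= xs -> 0 <= x ->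
  0 <= xs ^ 2 * F' xs + x * F x - x * marginal_cost F F' xs.
Proof.
  intros Hxs Hx. destruct (Rle_lt_or_eq_dec 0 xs Hxs) as [Hpos|<-].
  - pose proof (cost_tangent_le xs x Hpos Hx). unfold marginal_cost in *. nra.
  - unfold marginal_cost. rewrite hF0. pose proof (hFnn x Hx). nra.
Qed.

Hypothesis hFcont0 : continuous_within (Rle 0) F 0.
Hypothesis hF'cont : forall x, 0 < x -> continuity_pt F' x.

Lemma marginal_cost_continuous x : 0 <= x ->
  continuous_within (Rle 0) (marginal_cost F F') x.
Proof.
  intros Hx. destruct (Rle_lt_or_eq_dec 0 x Hx) as [Hpos|<-].
  - apply continuity_pt_continuous_within, continuity_pt_plus.
    + apply derivable_continuous_pt. exists (F' x). now apply hFder.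
    + apply continuity_pt_mult; [apply continuity_pt_id | now apply hF'cont].
  - (* 0 <= x F'(x) <= 2 F(2x), and F is continuous at 0 with F 0 = 0 *)
    intros eps Heps. destruct (hFcont0 (eps / 3)) as [delta [Hdelta Hnear]]; [lra|].
    assert (Fsmall : forall z, 0 <= z < delta -> F z < eps / 3).
    { intros z Hz.
      assert (Hzd : Rabs (z - 0) < delta) by (rewrite Rminus_0_r, Rabs_pos_eq; lra).
      specialize (Hnear z (proj1 Hz) Hzd).
      rewrite hF0, Rminus_0_r, Rabs_pos_eq in Hnear by (apply hFnn; lra). exact Hnear. }
    exists (delta / 2); split; [lra|]. intros z Hz Hzd.
    rewrite Rminus_0_r, Rabs_pos_eq in Hzd by lra.
    unfold marginal_cost. rewrite hF0, Rmult_0_l, Rplus_0_r, Rminus_0_r.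
    destruct (Rle_lt_or_eq_dec 0 z Hz) as [Hzpos|<-].
    + pose proof (sqr_mul_F'_gt0 z Hzpos). pose proof (mul_F'_le_F_double z Hzpos).
      pose proof (Fsmall z ltac:(lra)). pose proof (Fsmall (2 * z) ltac:(lra)).
      pose proof (hFnn z Hz).
      assert (0 < z * F' z) by (apply (Rmult_lt_reg_l z); nra).
      rewrite Rabs_pos_eq; lra.
    + rewrite hF0, Rmult_0_l, Rplus_0_r, Rabs_R0. lra.
Qed.

Hypothesis hFinc : forall x y, 0 < x -> x < y -> x ^ 2 * F' x < y ^ 2 * F' y.

Variable G : R -> R.
Hypothesis hGinv1 : forall x, 0 < x -> G (x ^ 2 * F' x) = x.
Hypothesis hGinv2 : forall y, 0 < y -> 0 < G y /\ (G y) ^ 2 * F' (G y) = y.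

Lemma G_increasing a b : 0 < a -> a < b -> G a < G b.
Proof.
  intros Ha Hab.
  destruct (hGinv2 a Ha) as [Ga Ea]. destruct (hGinv2 b ltac:(lra)) as [Gb Eb].
  destruct (Rlt_or_le (G a) (G b)) as [ok|Hle]; auto. exfalso.
  destruct (Rle_lt_or_eq_dec _ _ Hle) as [Hlt|Heq].
  - pose proof (hFinc _ _ Gb Hlt). lra.
  - rewrite Heq in Eb. lra.
Qed.

Lemma G_continuous_pos c : 0 < c -> continuous_within (Rlt 0) G c.
Proof.
  intros Hc eps Heps. destruct (hGinv2 c Hc) as [Gc Ec].
  set (e := Rmin eps (G c) / 2).
  assert (He : 0 < e < G c /\ e < eps).
  { pose proof (Rmin_l eps (G c)). pose proof (Rmin_r eps (G c)).
    pose proof (Rmin_glb_lt _ _ _ Heps Gc). unfold e. lra. }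
  (* G maps (y1, y2) into (G c - e, G c + e) *)
  set (y1 := (G c - e) ^ 2 * F' (G c - e)). set (y2 := (G c + e) ^ 2 * F' (G c + e)).
  assert (Hy1 : y1 < c) by (rewrite <- Ec; apply hFinc; lra).
  assert (Hy2 : c < y2) by (rewrite <- Ec; apply hFinc; lra).
  assert (Hy1pos : 0 < y1) by (apply sqr_mul_F'_gt0; lra).
  exists (Rmin (c - y1) (y2 - c)); split; [apply Rmin_glb_lt; lra|].
  intros y Hy Hyc. pose proof (Rmin_l (c - y1) (y2 - c)). pose proof (Rmin_r (c - y1) (y2 - c)).
  apply Rabs_def2 in Hyc.
  pose proof (G_increasing y1 y Hy1pos ltac:(lra)) as Hlow.
  pose proof (G_increasing y y2 Hy ltac:(lra)) as Hup.
  unfold y1, y2 in Hlow, Hup. rewrite hGinv1 in Hlow, Hup by lra.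
  apply Rabs_def1; lra.
Qed.

Hypothesis hG0 : G 0 = 0.

Lemma G_continuous c : 0 <= c -> continuous_within (Rle 0) G c.
Proof.
  intros Hc. destruct (Rle_lt_or_eq_dec 0 c Hc) as [Hpos|<-].
  - apply (continuous_within_local _ (Rlt 0) _ _ c); auto.
    + intros z Hz. apply Rabs_def2 in Hz. lra.
    + eapply continuous_within_subset; [|now apply G_continuous_pos]. now intros z [].
  - intros eps Heps. exists ((eps / 2) ^ 2 * F' (eps / 2)).
    split; [apply sqr_mul_F'_gt0; lra|]. intros y Hy Hyd.
    rewrite hG0, Rminus_0_r in *. rewrite Rabs_pos_eq in Hyd by auto.
    destruct (Rle_lt_or_eq_dec 0 y Hy) as [Hypos|<-]; [|rewrite hG0, Rabs_R0; lra].
    pose proof (G_increasing _ _ Hypos Hyd) as Hlt. rewrite hGinv1 in Hlt by lra.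
    rewrite Rabs_pos_eq by (apply Rlt_le, hGinv2, Hypos). lra.
Qed.

End Cost.

Lemma in_dom_le dA y z : in_dom y dA -> 0 <= z <= y -> in_dom z dA.
Proof.
  intros [Hy Hb] Hz. split; [lra|]. destruct dA; simpl in *; auto; lra.
Qed.

Lemma below_right_nbhs dA y : below y dA ->
  exists r, 0 < r /\ forall z, z < y + r -> below z dA.
Proof.
  destruct dA as [b|]; simpl; intros Hy.
  - exists (b - y); split; intros; lra.
  - exists 1; split; auto; lra.
Qed.

Lemma in_dom_nbhs dA y : in_dom y dA -> 0 < y ->
  exists r, 0 < r /\ forall z, Rabs (z - y) < r -> in_dom z dA.
Proof.
  intros [_ Hb] Hy. destruct (below_right_nbhs dA y Hb) as [r [Hr Hz]].
  exists (Rmin y r); split; [now apply Rmin_glb_lt|].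
  intros z Hzy. pose proof (Rmin_l y r). pose proof (Rmin_r y r).
  apply Rabs_def2 in Hzy. split; [lra | apply Hz; lra].
Qed.

Lemma in_dom_right_nbhs_0 dA : (forall b, dA = Some b -> 0 < b) ->
  exists r, 0 < r /\ forall z, 0 <= z < r -> in_dom z dA.
Proof.
  intros HdA. assert (H0 : below 0 dA) by (destruct dA; simpl; auto).
  destruct (below_right_nbhs dA 0 H0) as [r [Hr Hz]].
  exists r; split; auto. intros z Hzr. split; [lra | apply Hz; lra].
Qed.

Section Solution.

Variables (A : R) (dA : option R) (kA : R -> R) (F F' G : R -> R).
Hypothesis hA : 0 < A.
Hypothesis hdA : forall b, dA = Some b -> 0 < b.
Hypothesis hk0 : kA 0 = 0.
Hypothesis hkpos : forall u, in_dom u dA -> 0 < u -> 0 < kA u.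
Hypothesis hkcont : forall u, in_dom u dA -> continuous_within (fun z => in_dom z dA) kA u.
Hypothesis hFnn : forall x, 0 <= x -> 0 <= F x.
Hypothesis hFcont0 : continuous_within (Rle 0) F 0.
Hypothesis hFder : forall x, 0 < x -> derivable_pt_lim F x (F' x).
Hypothesis hF'cont : forall x, 0 < x -> continuity_pt F' x.
Hypothesis hF0 : F 0 = 0.
Hypothesis hFconv : strictly_convex_nonneg (fun x => x * F x).
Hypothesis hFinc : forall x y, 0 < x -> x < y -> x ^ 2 * F' x < y ^ 2 * F' y.
Hypothesis hG0 : G 0 = 0.
Hypothesis hGinv1 : forall x, 0 < x -> G (x ^ 2 * F' x) = x.
Hypothesis hGinv2 : forall y, 0 < y -> 0 < G y /\ (G y) ^ 2 * F' (G y) = y.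

Local Notation g := (integrand kA F G A).

Lemma kA_ge0 y : in_dom y dA -> 0 <= kA y.
Proof.
  intros Hy. destruct (Rle_lt_or_eq_dec 0 y (proj1 Hy)) as [Hpos|<-].
  - now apply Rlt_le, hkpos.
  - lra.
Qed.

Lemma optimal_rate_spec y : in_dom y dA ->
  0 <= G (kA y / A) /\ kA y = A * (G (kA y / A) ^ 2 * F' (G (kA y / A))).
Proof.
  intros Hy. destruct (Rle_lt_or_eq_dec 0 y (proj1 Hy)) as [Hpos|<-].
  - destruct (hGinv2 (kA y / A)) as [HG HGinv].
    { apply Rdiv_lt_0_compat; auto. }
    split; [lra|]. rewrite HGinv. field. lra.
  - rewrite hk0, Rdiv_0_l, hG0. split; [lra | ring].
Qed.

Lemma integrand_eq y : in_dom y dA -> g y = A * marginal_cost F F' (G (kA y / A)).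
Proof.
  intros Hy. unfold integrand, marginal_cost.
  destruct (Req_EM_T y 0) as [->|Hne].
  - rewrite hk0, Rdiv_0_l, hG0, hF0. ring.
  - destruct (optimal_rate_spec y Hy) as [_ Hk].
    assert (Hpos : 0 < G (kA y / A)).
    { apply hGinv2, Rdiv_lt_0_compat; auto. apply hkpos; auto.
      destruct Hy; lra. }
    rewrite Hk at 1. field. lra.
Qed.

Lemma integrand_continuous y : in_dom y dA ->
  continuous_within (fun z => in_dom z dA) g y.
Proof.
  intros Hy.
  apply (continuous_within_ext _ _ (fun z => A * marginal_cost F F' (G (kA z / A))));
    [auto | apply integrand_eq |].
  apply continuous_within_scal.
  assert (Hq : continuous_within (fun z => in_dom z dA) (fun z => kA z / A) y).
  { apply (continuous_within_ext _ _ (fun z => / A * kA z)); auto.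
    - intros z _. unfold Rdiv. ring.
    - now apply continuous_within_scal, hkcont. }
  assert (Hq0 : forall z, in_dom z dA -> 0 <= kA z / A).
  { intros z Hz. apply Rdiv_le_0_compat; [now apply kA_ge0 | lra]. }
  apply (continuous_within_comp _ (Rle 0) (fun z => G (kA z / A))).
  - intros z Hz. apply (optimal_rate_spec z Hz).
  - apply (continuous_within_comp _ (Rle 0)); auto.
    eapply G_continuous; eauto.
  - apply marginal_cost_continuous; auto. apply (optimal_rate_spec y Hy).
Qed.

Lemma integrand_ex_RInt y : in_dom y dA -> ex_RInt g 0 y.
Proof.
  intros Hy. apply ex_RInt_continuous_within; [apply Hy|].
  intros z Hz. apply (continuous_within_subset _ (fun w => in_dom w dA)).
  - intros w Hw. apply (in_dom_le dA y); auto.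
  - apply integrand_continuous, (in_dom_le dA y); auto.
Qed.

Lemma RInt_integrand_derivable y : in_dom y dA -> 0 < y ->
  derivable_pt_lim (fun y => RInt g 0 y) y (g y).
Proof.
  intros Hy Hpos. destruct (in_dom_nbhs dA y Hy Hpos) as [r [Hr Hball]].
  apply is_derive_Reals, (is_derive_RInt (V := R_NormedModule) _ _ 0).
  - exists (mkposreal r Hr). intros z Hz.
    apply (RInt_correct (V := R_CompleteNormedModule)), integrand_ex_RInt, Hball, Hz.
  - apply continuity_pt_filterlim, (continuous_within_continuity_pt _ _ y r Hr Hball).
    now apply integrand_continuous.
Qed.

Lemma RInt_integrand_right_derivable_0 eps : 0 < eps ->
  exists delta, 0 < delta /\ forall h, 0 < h < delta ->
    Rabs ((RInt g 0 h - RInt g 0 0) / h - g 0) < eps.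
Proof.
  intros Heps. destruct (in_dom_right_nbhs_0 dA hdA) as [r [Hr Hdom]].
  rewrite <- (Rplus_0_l r) in Hdom.
  destruct (RInt_right_derivative g 0 r Hr) with (eps := eps) as [delta [Hdelta Hquot]];
    auto.
  - intros x Hx. now apply integrand_ex_RInt, Hdom.
  - apply (continuous_within_subset _ (fun z => in_dom z dA)); auto.
    apply integrand_continuous, Hdom. lra.
  - exists delta; split; auto. intros h Hh.
    specialize (Hquot h ltac:(lra)). rewrite Rminus_0_r in Hquot.
    rewrite RInt_point. unfold zero; simpl. now rewrite Rminus_0_r.
Qed.

Lemma integrand_hjb y : in_dom y dA ->
  0 <= G (kA y / A) /\
  (forall x, 0 <= x -> 0 <= kA y + (A * x * F x - x * g y)) /\
  kA y + (A * G (kA y / A) * F (G (kA y / A)) - G (kA y / A) * g y) = 0.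
Proof.
  intros Hy. rewrite (integrand_eq y Hy).
  destruct (optimal_rate_spec y Hy) as [Hxs Hk].
  set (xs := G (kA y / A)) in *. rewrite Hk. split; [|split]; auto.
  - intros x Hx. pose proof (hamiltonian_gap_ge0 F F' hFnn hFder hF0 hFconv xs x Hxs Hx).
    nra.
  - unfold marginal_cost. ring.
Qed.

End Solution.

Theorem mainTheorem8
  (A : R) (dA : option R) (kA : R -> R) (F F' G : R -> R)
  (hA : 0 < A)
  (hdA : forall b, dA = Some b -> 0 < b)
  (* kappa_A enters only through these properties, in place of its Levy-process definition *)
  (hk0 : kA 0 = 0)
  (hkpos : forall u, in_dom u dA -> 0 < u -> 0 < kA u)
  (hkcont : forall u, in_dom u dA -> forall eps, 0 < eps ->
     exists delta, 0 < delta /\ forall z, in_dom z dA -> Rabs (z - u) < delta ->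
       Rabs (kA z - kA u) < eps)
  (hFnn : forall x, 0 <= x -> 0 <= F x)
  (hFcont : forall x, 0 <= x -> forall eps, 0 < eps ->
     exists delta, 0 < delta /\ forall z, 0 <= z -> Rabs (z - x) < delta ->
       Rabs (F z - F x) < eps)
  (hFder : forall x, 0 < x -> derivable_pt_lim F x (F' x))
  (hF'cont : forall x, 0 < x -> continuity_pt F' x)
  (hF0 : F 0 = 0)
  (hFconv : strictly_convex_nonneg (fun x => x * F x))
  (hFinc : forall x y, 0 < x -> x < y -> x ^ 2 * F' x < y ^ 2 * F' y)
  (hFinf : forall M, exists x0, 0 < x0 /\ forall x, x0 <= x -> M <= x ^ 2 * F' x)
  (hG0 : G 0 = 0)
  (hGinv1 : forall x, 0 < x -> G (x ^ 2 * F' x) = x)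
  (hGinv2 : forall y, 0 < y -> 0 < G y /\ (G y) ^ 2 * F' (G y) = y) :
  let g := integrand kA F G A in
  exists v : R -> R,
    (forall y, in_dom y dA -> inhabited (Riemann_integrable g 0 y)) /\
    (forall y (pr : Riemann_integrable g 0 y), in_dom y dA -> v y = RiemannInt pr) /\
    (forall y, in_dom y dA -> 0 < y -> derivable_pt_lim v y (g y)) /\
    (forall eps, 0 < eps -> exists delta, 0 < delta /\
       forall h, 0 < h < delta -> Rabs ((v h - v 0) / h - g 0) < eps) /\
    (forall y, in_dom y dA -> forall eps, 0 < eps ->
       exists delta, 0 < delta /\ forall z, in_dom z dA -> Rabs (z - y) < delta ->
         Rabs (g z - g y) < eps) /\
    v 0 = 0 /\
    (* the infimum in the HJB equation is 0 and is attained at G (kA y / A) *)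
    (forall y, in_dom y dA ->
       0 <= G (kA y / A) /\
       (forall x, 0 <= x -> 0 <= kA y + (A * x * F x - x * g y)) /\
       kA y + (A * G (kA y / A) * F (G (kA y / A)) - G (kA y / A) * g y) = 0).
Proof.
  intros g.
  assert (hFcont0 : continuous_within (Rle 0) F 0) by exact (hFcont 0 (Rle_refl 0)).
  exists (fun y => RInt g 0 y).
  split; [|split; [|split; [|split; [|split; [|split]]]]].
  - intros y Hy. constructor. apply ex_RInt_Reals_0. eapply integrand_ex_RInt; eauto.
  - intros y pr _. apply RInt_Reals.
  - intros y Hy Hpos. eapply RInt_integrand_derivable; eauto.
  - eapply RInt_integrand_right_derivable_0; eauto.
  - eapply integrand_continuous; eauto.
  - rewrite RInt_point; reflexivity.
  - eapply integrand_hjb; eauto.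
Qed.
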